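(* Let $\kappa$ be a cardinal, $\mathscr A$ an infinite set and $\{X_\alpha:\alpha\in\mathscr A\}$ a family of Banach spaces each of which is $\mathrm{ASQ}_{<\kappa}$. If $\mathcal U$ is an $\aleph_1$-incomplete non-principal ultrafilter over $\mathscr A$, then the ultraproduct $(X_\alpha)_{\mathcal U}$ is $\mathrm{SQ}_{<\kappa}$.
   Context: A non-principal ultrafilter $\mathcal U$ over $\mathscr A$ is $\aleph_1$-incomplete if it is not closed under countable intersections (equivalently, there is $f:\mathscr A\to(0,\infty)$ with $\lim_{\mathcal U}f(\alpha)=0$). The ultraproduct $(X_\alpha)_{\mathcal U}$ is the quotient $\ell_\infty(\mathscr A,X_\alpha)/c_{0,\mathcal U}(\mathscr A,X_\alpha)$, where $\ell_\infty(\mathscr A,X_\alpha)$ consists of bounded families $(x_\alpha)$ with $x_\alpha\in X_\alpha$ under the sup norm and $c_{0,\mathcal U}$ is the subspace of families with $\lim_{\mathcal U}\|x_\alpha\|=0$; its norm satisfies $\|(x_\alpha)_{\mathcal U}\|=\lim_{\mathcal U}\|x_\alpha\|$. A Banach space $Z$ is $\mathrm{ASQ}_{<\kappa}$ if for every set $A\subset S_Z$ with $|A|<\kappa$ and every $\varepsilon>0$ there exists $y\in S_Z$ with $\|x\pm y\|\le 1+\varepsilon$ for all $x\in A$; $Z$ is $\mathrm{SQ}_{<\kappa}$ if for every such $A$ there exists $y\in S_Z$ with $\|x\pm y\|\le 1$ for all $x\in A$. *)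

From HB Require Import structures.
From mathcomp Require Import all_boot all_order all_algebra.
From mathcomp Require Import all_classical all_reals all_analysis.
Set Implicit Arguments. Unset Strict Implicit. Unset Printing Implicit Defensive.
Import Order.TTheory GRing.Theory Num.Theory.
Import numFieldNormedType.Exports.
Local Open Scope classical_set_scope.
Local Open Scope ring_scope.

(* Cardinals: a cardinal kappa is represented as the cardinality of a type K.
   [card_lt_kappa K S] means |S| < |K| (= kappa). *)
Definition card_lt_kappa (K : Type) {T : Type} (S : set T) : Prop :=
  card_le S [set: K] /\ ~ card_le [set: K] S.

Definition unit_sphere (R : realType) (Z : normedModType R) : set Z :=
  [set z | `|z| = 1].

Definition ASQ_lt (R : realType) (K : Type) (Z : normedModType R) : Prop :=
  forall (S : set Z), S `<=` @unit_sphere R Z -> card_lt_kappa K S ->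
  forall eps : R, 0 < eps ->
  exists2 y, @unit_sphere R Z y &
    forall x, S x -> `|x + y| <= 1 + eps /\ `|x - y| <= 1 + eps.

Definition SQ_lt (R : realType) (K : Type) (Z : normedModType R) : Prop :=
  forall (S : set Z), S `<=` @unit_sphere R Z -> card_lt_kappa K S ->
  exists2 y, @unit_sphere R Z y &
    forall x, S x -> `|x + y| <= 1 /\ `|x - y| <= 1.

Definition nonprincipal (A : Type) (U : set_system A) : Prop :=
  ~ exists a : A, forall B : set A, U B <-> B a.

Definition aleph1_incomplete (A : Type) (U : set_system A) : Prop :=
  exists B : nat -> set A, (forall n, U (B n)) /\ ~ U (\bigcap_n B n).

Section Ultraproduct.
Variables (R : realType) (A : Type) (X : A -> normedModType R)
          (U : set_system A).

Definition linf_bounded (x : forall a, X a) : Prop :=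
  exists M : R, forall a, `|x a| <= M.

Definition fam_add (x y : forall a, X a) : forall a, X a := fun a => x a + y a.
Definition fam_sub (x y : forall a, X a) : forall a, X a := fun a => x a - y a.

Definition up_seminorm (x : forall a, X a) : R :=
  lim ((fun a => `|x a|) @ U).

Definition up_class (x : forall a, X a) : set (forall a, X a) :=
  [set y | linf_bounded y /\ up_seminorm (fam_sub y x) = 0].

(* the ultraproduct (X_a)_U = ell_infty / c_{0,U}, as the type of classes *)
Definition ultraproduct : Type :=
  {C : set (forall a, X a) | exists x, linf_bounded x /\ C = up_class x}.

Definition up_rep (C : ultraproduct) : forall a, X a :=
  proj1_sig (cid (proj2_sig C)).

(* the quotient norm ||(x_a)_U|| = lim_U ||x_a||; sums/differences of
   classes are classes of sums/differences of representatives *)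
Definition up_norm (C : ultraproduct) : R := up_seminorm (up_rep C).
Definition up_norm_add (C D : ultraproduct) : R :=
  up_seminorm (fam_add (up_rep C) (up_rep D)).
Definition up_norm_sub (C D : ultraproduct) : R :=
  up_seminorm (fam_sub (up_rep C) (up_rep D)).

Definition ultraproduct_SQ_lt (K : Type) : Prop :=
  forall (S : set ultraproduct), (forall C, S C -> up_norm C = 1) ->
  card_lt_kappa K S ->
  exists2 Y : ultraproduct, up_norm Y = 1 &
    forall C, S C -> up_norm_add C Y <= 1 /\ up_norm_sub C Y <= 1.

End Ultraproduct.

(* Aleph_1-incompleteness of U yields weights eps_a > 0 with lim_U eps_a = 0.
   Given fewer than kappa unit vectors (x_a)_U of the ultraproduct, in each
   coordinate a the directions x_a / ||x_a|| are fewer than kappa points of the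
   unit sphere of X_a, so ASQ_{<kappa} gives a unit y_a with
   ||x_a / ||x_a|| +- y_a|| <= 1 + eps_a for all of them at once.  Then
   ||x_a +- y_a|| <= 1 + eps_a + | ||x_a|| - 1 |, whose U-limit is 1, so the
   unit vector (y_a)_U witnesses SQ_{<kappa}. *)

From HB Require Import structures.
From mathcomp Require Import all_boot all_order all_algebra.
From mathcomp Require Import all_classical all_reals all_analysis.
From mathcomp Require Import lra.
Set Implicit Arguments. Unset Strict Implicit. Unset Printing Implicit Defensive.
Import Order.TTheory GRing.Theory Num.Theory.
Import numFieldNormedType.Exports.
Local Open Scope classical_set_scope.
Local Open Scope ring_scope.

Lemma card_lt_kappa_le (K T V : Type) (S : set T) (S' : set V) :
  (S' #<= S)%card -> card_lt_kappa K S -> card_lt_kappa K S'.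
Proof.
move=> S'S [SK KS]; split; first exact: card_le_trans S'S SK.
by move=> KS'; apply: KS; exact: card_le_trans KS' S'S.
Qed.

Section NormalizedVectors.
Variables (R : realType) (V : normedModType R).

Definition normalize (x : V) : V := `|x|^-1 *: x.

Lemma norm_sub_normalize (x : V) : x != 0 -> `|x - normalize x| = `| `|x| - 1|.
Proof.
move=> x0; have nx0 : `|x| != 0 by rewrite normr_eq0.
have -> : x - normalize x = (`|x| - 1) / `|x| *: x.
  by rewrite mulrBl mulfV // mul1r scalerBl scale1r.
by rewrite normrZ normrM normfV normr_id mulfVK.
Qed.

Lemma norm_add_le_normalize (x w : V) (e : R) : 0 <= e -> `|w| = 1 ->
  (x != 0 -> `|normalize x + w| <= 1 + e) -> `|x + w| <= 1 + e + `| `|x| - 1|.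
Proof.
move=> e_ge0 w1 xw; have [->|x0] := eqVneq x 0.
  by rewrite add0r normr0 sub0r normrN normr1 w1; lra.
have -> : x + w = (x - normalize x) + (normalize x + w) by rewrite addrA subrK.
apply: le_trans (ler_normD _ _) _; have := xw x0; rewrite norm_sub_normalize //; lra.
Qed.

End NormalizedVectors.

Section UltrafilterLimits.
Variables (R : realType) (A : Type) (U : set_system A).
Hypothesis U_ultra : UltraFilter U.
#[local] Instance U_proper : ProperFilter U := @ultra_proper _ _ U_ultra.

Lemma ultra_bounded_cvg (f : A -> R) (M : R) :
  (forall a, `|f a| <= M) -> cvg (f @ U).
Proof.
move=> fM; have : (f @ U) `[-M, M]%classic.
  by apply: nearW => a; rewrite /= in_itv /= -ler_norml.
move=> /(@segment_compact R (-M) M (f @ U) _) [l [_ fl]].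
apply: (cvgP l) => N Nl.
have [//|NcU] := in_ultra_setVsetC (f @^-1` N) U_ultra.
by have [a []] := fl (~` N) N NcU Nl.
Qed.

Lemma aleph1_incomplete_cvg0 : aleph1_incomplete U ->
  exists2 eps : A -> R, (forall a, 0 < eps a) & eps @ U --> 0.
Proof.
move=> [B [BU notIU]].
have IcU : U (~` \bigcap_n B n) by case: (in_ultra_setVsetC (\bigcap_n B n) U_ultra).
(* Off [\bigcap_n B n], [exit a] is an index with [~ B (exit a) a]; membership in
   [B 0], ..., [B k] then forces [k < exit a]. *)
pose exit a := xget 0%N [set n | ~ B n a].
exists (fun a => (exit a).+1%:R^-1) => [a|]; first by rewrite invr_gt0 ltr0n.
apply/cvgr0Pnorm_lt => e e_gt0.
pose k := Num.Def.truncn e^-1.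
have early_in : \forall a \near U, forall m : 'I_k.+1, B m a.
  by apply: filter_forall => m; exact: BU.
apply: filterS (filterI IcU early_in) => a [/= notIa early].
have /(xgetPex 0%N) exitP : exists n, ~ B n a.
  by apply: contrapT => /forallNP nB; apply: notIa => n _; exact: contrapT (nB n).
have k_lt : (k < exit a)%N.
  rewrite ltnNge; apply/negP => ek; apply: exitP.
  exact: (early (@Ordinal k.+1 (exit a) ek)).
rewrite ger0_norm ?invr_ge0 // invf_plt ?posrE ?ltr0n //.
apply: lt_le_trans (truncnS_gt _) _; rewrite ler_nat; exact: ltnW.
Qed.

Section UltraproductNorm.
Variable X : A -> normedModType R.

Lemma linf_boundedD (x z : forall a, X a) :
  linf_bounded x -> linf_bounded z -> linf_bounded (fam_add x z).
Proof.
move=> [M xM] [N zN]; exists (M + N) => a.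
by apply: le_trans (ler_normD _ _) _; exact: lerD.
Qed.

Lemma linf_boundedB (x z : forall a, X a) :
  linf_bounded x -> linf_bounded z -> linf_bounded (fam_sub x z).
Proof.
move=> [M xM] [N zN]; exists (M + N) => a.
by apply: le_trans (ler_normB _ _) _; exact: lerD.
Qed.

Lemma up_seminorm_cvg (x : forall a, X a) : linf_bounded x ->
  (fun a => `|x a|) @ U --> up_seminorm U x.
Proof.
move=> [M xM]; rewrite /up_seminorm.
by apply: (ultra_bounded_cvg (M := M)) => a; rewrite normr_id.
Qed.

Lemma up_seminorm_le (x : forall a, X a) (g : A -> R) (l : R) :
  linf_bounded x -> g @ U --> l -> (forall a, `|x a| <= g a) ->
  up_seminorm U x <= l.
Proof.
move=> xb gl xg; rewrite -subr_le0.
apply: cvgr_to_le (cvgB (up_seminorm_cvg xb) gl) _.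
by apply: nearW => a; rewrite subr_le0.
Qed.

Lemma up_seminorm_unit_near (z w : forall a, X a) : linf_bounded z ->
  (forall a, `|w a| = 1) -> (fun a => `|w a - z a|) @ U --> 0 ->
  up_seminorm U z = 1.
Proof.
move=> zb w1 wz0; apply: cvg_lim => //.
have lo : (fun a => 1 - `|w a - z a|) @ U --> (1 - 0 : R).
  by apply: cvgB => //; exact: cvg_cst.
have hi : (fun a => 1 + `|w a - z a|) @ U --> (1 + 0 : R).
  by apply: cvgD => //; exact: cvg_cst.
rewrite subr0 in lo; rewrite addr0 in hi.
apply: squeeze_cvgr lo hi; apply: nearW => a.
rewrite -(w1 a) -ler_distl distrC; exact: ler_dist_dist.
Qed.

Lemma up_class_refl (x : forall a, X a) : linf_bounded x -> up_class U x x.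
Proof.
move=> xb; split => //; rewrite /up_seminorm /fam_sub.
under eq_fun do rewrite subrr normr0.
exact: lim_cst.
Qed.

Lemma up_rep_spec (C : ultraproduct X U) :
  linf_bounded (up_rep C) /\ sval C = up_class U (up_rep C).
Proof. by rewrite /up_rep; case: cid. Qed.

Definition up_of (x : forall a, X a) (xb : linf_bounded x) : ultraproduct X U :=
  exist _ (up_class U x) (ex_intro _ x (conj xb erefl)).

Lemma up_rep_of_near (x : forall a, X a) (xb : linf_bounded x) :
  (fun a => `|x a - up_rep (up_of xb) a|) @ U --> 0.
Proof.
have [rb rE] := up_rep_spec (up_of xb).
have := up_class_refl xb; rewrite /= in rE; rewrite rE => -[_ <-].
by apply: up_seminorm_cvg; exact: linf_boundedB.
Qed.

Definition up_slice (S : set (ultraproduct X U)) (a : A) : set (X a) :=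
  [set normalize (up_rep C a) | C in [set C | S C /\ up_rep C a != 0]].
Arguments up_slice S a : clear implicits.

Lemma up_slice_rep (S : set (ultraproduct X U)) (C : ultraproduct X U) (a : A) :
  S C -> up_rep C a != 0 -> up_slice S a (normalize (up_rep C a)).
Proof. by move=> SC Ca0; exists C. Qed.

Lemma up_slice_unit (S : set (ultraproduct X U)) (a : A) :
  up_slice S a `<=` @unit_sphere R (X a).
Proof. by move=> _ [C [_ Ca0] <-]; exact: normfZV. Qed.

Lemma card_lt_kappa_up_slice (K : Type) (S : set (ultraproduct X U)) (a : A) :
  card_lt_kappa K S -> card_lt_kappa K (up_slice S a).
Proof.
apply: card_lt_kappa_le; apply: card_le_trans (card_image_le _ _) _.
by apply: subset_card_le => C [].
Qed.

Section SquarenessBound.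
Variables (eps : A -> R) (x z w : forall a, X a).
Hypotheses (eps_ge0 : forall a, 0 <= eps a) (eps_cvg0 : eps @ U --> 0).
Hypotheses (xb : linf_bounded x) (zb : linf_bounded z) (x1 : up_seminorm U x = 1).
Hypotheses (w1 : forall a, `|w a| = 1) (wz0 : (fun a => `|w a - z a|) @ U --> 0).

Lemma up_seminorm_add_le :
  (forall a, x a != 0 -> `|normalize (x a) + w a| <= 1 + eps a) ->
  up_seminorm U (fam_add x z) <= 1.
Proof.
move=> xw.
have x_near1 : (fun a => `| `|x a| - 1|) @ U --> (`|1 - 1| : R).
  apply: cvg_norm; apply: cvgB => //; last exact: cvg_cst.
  by rewrite -x1; exact: up_seminorm_cvg.
rewrite subrr normr0 in x_near1.
have g1 : (fun a => 1 + eps a + `| `|x a| - 1| + `|w a - z a|) @ U -->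
          (1 + 0 + 0 + 0 : R).
  by apply: cvgD => //; apply: cvgD => //; apply: cvgD => //; exact: cvg_cst.
rewrite !addr0 in g1.
apply: (up_seminorm_le (linf_boundedD xb zb) g1) => a.
have -> : fam_add x z a = (x a + w a) - (w a - z a).
  by rewrite /fam_add opprB addrA addrAC addrK.
apply: le_trans (ler_normB _ _) _; rewrite lerD2r.
exact: norm_add_le_normalize (eps_ge0 a) (w1 a) (xw a).
Qed.

End SquarenessBound.

Lemma up_seminorm_sub_le (eps : A -> R) (x z w : forall a, X a) :
  (forall a, 0 <= eps a) -> eps @ U --> 0 ->
  linf_bounded x -> linf_bounded z -> up_seminorm U x = 1 ->
  (forall a, `|w a| = 1) -> (fun a => `|w a - z a|) @ U --> 0 ->
  (forall a, x a != 0 -> `|normalize (x a) - w a| <= 1 + eps a) ->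
  up_seminorm U (fam_sub x z) <= 1.
Proof.
move=> eps_ge0 eps_cvg0 xb [M zM] x1 w1 wz0 xw.
apply: (@up_seminorm_add_le eps x (fun a => - z a) (fun a => - w a)) => // [|a|].
- by exists M => a; rewrite normrN.
- by rewrite normrN.
- by under eq_fun do rewrite -opprD normrN.
Qed.

End UltraproductNorm.

End UltrafilterLimits.

Theorem theorem4p8 (R : realType) (K : Type) (A : Type)
    (X : A -> completeNormedModType R) (U : set_system A) :
  infinite_set [set: A] ->
  (forall a, ASQ_lt K (X a)) ->
  UltraFilter U -> nonprincipal U -> aleph1_incomplete U ->
  ultraproduct_SQ_lt (fun a => (X a : normedModType R)) U K.
Proof.
(* Infiniteness of [A] and non-principality follow from aleph_1-incompleteness. *)
move=> _ X_asq U_ultra _ /(aleph1_incomplete_cvg0 R U_ultra) [eps eps_gt0 eps_cvg0].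
move=> S S1 S_small.
have eps_ge0 a : 0 <= eps a by exact/ltW.
have y_ex a :=
  X_asq a _ (up_slice_unit (a := a)) (card_lt_kappa_up_slice a S_small) _ (eps_gt0 a).
pose y a := s2val (cid2 (y_ex a)).
have y1 a : `|y a| = 1 := s2valP (cid2 (y_ex a)).
have y_asq a C : S C -> up_rep C a != 0 ->
    `|normalize (up_rep C a) + y a| <= 1 + eps a /\
    `|normalize (up_rep C a) - y a| <= 1 + eps a.
  by move=> SC Ca0; apply: (s2valP' (cid2 (y_ex a))); exact: up_slice_rep.
have yb : linf_bounded y by exists 1 => a; rewrite y1.
have [Yb _] := up_rep_spec (up_of U yb).
have Yy := up_rep_of_near U_ultra yb.
exists (up_of U yb); first exact: up_seminorm_unit_near Yb y1 Yy.
move=> C SC; have [Cb _] := up_rep_spec C.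
split.
- apply: up_seminorm_add_le eps_ge0 eps_cvg0 Cb Yb (S1 C SC) y1 Yy _.
  by move=> a /(y_asq a C SC) [].
- apply: up_seminorm_sub_le eps_ge0 eps_cvg0 Cb Yb (S1 C SC) y1 Yy _.
  by move=> a /(y_asq a C SC) [].
Qed.
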